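(* Let $p,q,e$ be positive integers and $n>1$ an integer. If $(x,y)\in\mathbb{Z}_{2^e}^2$ lies on a cycle of length $n$ of the Cat map over $\mathbb{Z}_{2^e}$, then $$(G_n-2)\,x\equiv 0\pmod{2^e}\quad\text{and}\quad (G_n-2)\,y\equiv 0\pmod{2^e}.$$
   Context: $\mathbf{C}=\begin{bmatrix}1 & p\\ q & 1+pq\end{bmatrix}$; the Cat map over $\mathbb{Z}_{2^e}$ is the bijection $v\mapsto\mathbf{C}v\bmod 2^e$ of $\mathbb{Z}_{2^e}^2$; a point lies on a cycle of length $n$ if $n$ is the least positive integer with $\mathbf{C}^nv\equiv v\pmod{2^e}$. $A=pq+2$, $B=\sqrt{A^2-4}$, $G_n=\left(\frac{A+B}{2}\right)^n+\left(\frac{A-B}{2}\right)^n$ (an integer). *)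

From mathcomp Require Import all_boot all_order all_algebra.
Set Implicit Arguments. Unset Strict Implicit. Unset Printing Implicit Defensive.
Import Order.TTheory GRing.Theory Num.Theory.
Local Open Scope ring_scope.

(* Cat map C = [[1, p], [q, 1 + p q]] acting on integer column vectors (x, y). *)
Definition cat_step (p q : int) (v : int * int) : int * int :=
  (v.1 + p * v.2, q * v.1 + (1 + p * q) * v.2).

Definition cat_iter (p q : int) (n : nat) (v : int * int) : int * int :=
  iter n (cat_step p q) v.

Definition vcong (m : int) (u v : int * int) : Prop :=
  (u.1 = v.1 %[mod m])%Z /\ (u.2 = v.2 %[mod m])%Z.

Definition on_cycle_of_length (p q : int) (e n : nat) (v : int * int) : Prop :=
  (0 < n)%N /\ vcong (2 ^+ e) (cat_iter p q n v) v /\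
  (forall k : nat, (0 < k < n)%N -> ~ vcong (2 ^+ e) (cat_iter p q k v) v).

(* G_n = ((A+B)/2)^n + ((A-B)/2)^n with A = pq + 2, B = sqrt(A^2 - 4).
   Since (A±B)/2 are the roots of t^2 - A t + 1, G_n is the integer sequence
   G_0 = 2, G_1 = A, G_(k+2) = A G_(k+1) - G_k. *)
Fixpoint Gpair (A : int) (n : nat) : int * int :=
  match n with
  | 0%N => (2, A)
  | k.+1 => let g := Gpair A k in (g.2, A * g.2 - g.1)
  end.

Definition G (p q : int) (n : nat) : int := (Gpair (p * q + 2) n).1.

(** The n-th power [M] of the Cat matrix has determinant 1 and trace [G_n].
   If [M v = v (mod 2^e)], multiply [(M - 1) v = 0] by the adjugate of
   [M - 1]: this gives [det (M - 1) v = 0], and for a 2x2 matrix of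
   determinant 1 we have [det (M - 1) = 2 - tr M]. *)

From mathcomp Require Import all_boot all_order all_algebra.
From mathcomp Require Import ring.
Import Order.TTheory GRing.Theory Num.Theory.
Local Open Scope ring_scope.

Record mx22 := Mx22 { m11 : int; m12 : int; m21 : int; m22 : int }.

Definition mx22_one := Mx22 1 0 0 1.

Definition mx22_mul (M N : mx22) : mx22 :=
  Mx22 (m11 M * m11 N + m12 M * m21 N) (m11 M * m12 N + m12 M * m22 N)
       (m21 M * m11 N + m22 M * m21 N) (m21 M * m12 N + m22 M * m22 N).

Definition mx22_act (M : mx22) (v : int * int) : int * int :=
  (m11 M * v.1 + m12 M * v.2, m21 M * v.1 + m22 M * v.2).

Definition det22 (M : mx22) : int := m11 M * m22 M - m12 M * m21 M.

Definition tr22 (M : mx22) : int := m11 M + m22 M.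

Lemma mx22_act_mul M N v : mx22_act (mx22_mul M N) v = mx22_act M (mx22_act N v).
Proof. by case: M N => [a b c d] [a' b' c' d']; rewrite /mx22_act /=; congr pair; ring. Qed.

Lemma det22_mul M N : det22 (mx22_mul M N) = det22 M * det22 N.
Proof. by case: M N => [a b c d] [a' b' c' d']; rewrite /det22 /=; ring. Qed.

Lemma tr22_mul_cayley_hamilton C M :
  tr22 (mx22_mul C (mx22_mul C M)) =
  tr22 C * tr22 (mx22_mul C M) - det22 C * tr22 M.
Proof. by case: C M => [a b c d] [a' b' c' d']; rewrite /tr22 /det22 /=; ring. Qed.

Lemma fixed_mod_det1 (m : int) M (v : int * int) :
  det22 M = 1 -> vcong m (mx22_act M v) v ->
  ((tr22 M - 2) * v.1 = 0 %[mod m])%Z /\ ((tr22 M - 2) * v.2 = 0 %[mod m])%Z.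
Proof.
case: M v => [a b c d] [x y]; rewrite /det22 /tr22 /mx22_act /vcong /= => det1.
move=> [/eqP + /eqP]; rewrite !eqz_mod_dvd => dvd1 dvd2.
have -> : a + d - 2 = a + d - 1 - (a * d - b * c) by rewrite det1; ring.
split; apply/eqP; rewrite eqz_mod_dvd subr0.
- have -> : (a + d - 1 - (a * d - b * c)) * x =
            (1 - d) * (a * x + b * y - x) + b * (c * x + d * y - y) by ring.
  by rewrite rpredD // dvdz_mull.
- have -> : (a + d - 1 - (a * d - b * c)) * y =
            (1 - a) * (c * x + d * y - y) + c * (a * x + b * y - x) by ring.
  by rewrite rpredD // dvdz_mull.
Qed.

Definition cat_mx (p q : int) := Mx22 1 p q (1 + p * q).

Definition cat_pow (p q : int) (n : nat) : mx22 := iter n (mx22_mul (cat_mx p q)) mx22_one.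

Lemma det_cat_mx p q : det22 (cat_mx p q) = 1.
Proof. by rewrite /det22 /=; ring. Qed.

Lemma tr_cat_mx p q : tr22 (cat_mx p q) = p * q + 2.
Proof. by rewrite /tr22 /=; ring. Qed.

Lemma cat_iterE p q n v : cat_iter p q n v = mx22_act (cat_pow p q n) v.
Proof.
elim: n => [|n IH] /=; first by case: v => x y; rewrite /mx22_act /=; congr pair; ring.
by rewrite IH mx22_act_mul /cat_step /mx22_act /= !mul1r.
Qed.

Lemma det_cat_pow p q n : det22 (cat_pow p q n) = 1.
Proof.
elim: n => [|n IH]; first by rewrite /det22 /=; ring.
by rewrite /= det22_mul IH det_cat_mx mulr1.
Qed.

Lemma G_tr_cat_pow p q n : G p q n = tr22 (cat_pow p q n).
Proof.
rewrite /G; suff -> : Gpair (p * q + 2) n = (tr22 (cat_pow p q n), tr22 (cat_pow p q n.+1)) by [].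
elim: n => [|n IH]; first by rewrite /tr22 /=; congr pair; ring.
by rewrite /= IH /= tr22_mul_cayley_hamilton det_cat_mx tr_cat_mx mul1r.
Qed.

Theorem lemma7 (p q : int) (e n : nat) (x y : int) :
  0 < p -> 0 < q -> (0 < e)%N -> (1 < n)%N ->
  on_cycle_of_length p q e n (x, y) ->
  ((G p q n - 2) * x = 0 %[mod 2 ^+ e])%Z /\
  ((G p q n - 2) * y = 0 %[mod 2 ^+ e])%Z.
Proof.
move=> _ _ _ _ [_ [fixed _]].
rewrite G_tr_cat_pow.
by move: fixed; rewrite cat_iterE; apply: fixed_mod_det1; apply: det_cat_pow.
Qed.
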